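(* Let $d,k\ge 1$ be integers, let $\|\cdot\|$ be a norm on $\mathbb{R}^d$, let $\epsilon\ge 0$, and let $(X,Y)$ be a pair of random variables with values in $\mathbb{R}^d\times\mathbb{R}^k$. Let $\ell:\mathbb{R}^k\times\mathbb{R}^k\to\mathbb{R}_{\ge0}$ be a loss function and let $A,B:\mathbb{R}^k\times\mathbb{R}^k\to\mathbb{R}_{\ge 0}$ be functions with $A(u,u)=B(u,u)=0$ for all $u\in\mathbb{R}^k$ such that for all $u,v,u',v'\in\mathbb{R}^k$, $$\ell(u,v)+\ell(u',v')+A(u,u')\ge B(v,v')\quad\text{and}\quad \ell(u,v)+\ell(u',v')+A(v,v')\ge B(u,u').$$ Let $\mathcal{F}$ be a class of functions from $\mathbb{R}^d$ to $\mathbb{R}^k$. Then for every $f\in\mathcal{F}$, $$R(f)+R_\epsilon(f)\ge \max\left\{\mathbb{E}\left(\sup_{\Delta:\|\Delta\|\le\epsilon} B\big(f(X),f(X+\Delta)\big)\right),\ \mathbb{E}\,B(Y,Y')\right\},$$ where $Y'$ is a random variable such that, conditioned on $X$, $Y'$ is independent of $Y$ and has the same conditional distribution as $Y$ given $X$.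
   Context: The standard risk of $f$ is $R(f)=\mathbb{E}\,\ell(f(X),Y)$ and its adversarial risk is $R_\epsilon(f)=\mathbb{E}\left(\sup_{\Delta\in\mathbb{R}^d:\|\Delta\|\le\epsilon}\ell(f(X+\Delta),Y)\right)$. All expectations are assumed to be well defined (possibly $+\infty$). *)

From HB Require Import structures.
From mathcomp Require Import all_boot all_order all_algebra.
From mathcomp Require Import all_classical all_reals all_analysis.
From mathcomp Require Import matrix_topology measurable_realfun.

Set Implicit Arguments.
Unset Strict Implicit.
Unset Printing Implicit Defensive.

Import Order.TTheory GRing.Theory Num.Theory.
Import numFieldNormedType.Exports.
Local Open Scope classical_set_scope.
Local Open Scope ring_scope.

(* Borel sigma-algebra on R^n = 'rV[R]_n : the sigma-algebra generated by the
   coordinate maps (equivalently, the product of the Borel sigma-algebras). *)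
Definition rV_display : measure_display -> measure_display.
Proof. exact. Qed.

Section measurable_rV.
Variables (R : realType) (n : nat).

Definition rV_coord : 'I_n -> 'rV[R]_n -> R := fun i x => x ord0 i.

Let rV_set0 : g_sigma_preimage rV_coord set0.
Proof. rewrite /g_sigma_preimage; exact: (@sigma_algebra0 _ setT _). Qed.

Let rV_setC A : g_sigma_preimage rV_coord A -> g_sigma_preimage rV_coord (~` A).
Proof.
rewrite /g_sigma_preimage.
have [_ hC _] := @smallest_sigma_algebra _ setT
  (\big[setU/set0]_(i < n) preimage_set_system setT (rV_coord i) measurable).
by move=> /hC; rewrite setTD.
Qed.

Let rV_bigcup (F : _^nat) : (forall i, g_sigma_preimage rV_coord (F i)) ->
  g_sigma_preimage rV_coord (\bigcup_i (F i)).
Proof. rewrite /g_sigma_preimage; move=> H; exact: (@sigma_algebra_bigcup _ setT _ _ H). Qed.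

HB.instance Definition _ := @isMeasurable.Build (rV_display default_measure_display)
  'rV[R]_n (g_sigma_preimage rV_coord) rV_set0 rV_setC rV_bigcup.

End measurable_rV.

Definition is_norm (R : realType) (n : nat) (N : 'rV[R]_n -> R) : Prop :=
  [/\ forall x, 0 <= N x,
      forall x, N x = 0 -> x = 0,
      forall (a : R) x, N (a *: x) = `|a| * N x
    & forall x y, N (x + y) <= N x + N y].

Local Open Scope ereal_scope.

Definition risk (R : realType) (d0 : measure_display) (Omega : measurableType d0)
  (P : probability Omega R) (d k : nat)
  (loss : 'rV[R]_k -> 'rV[R]_k -> R) (f : 'rV[R]_d -> 'rV[R]_k)
  (X : Omega -> 'rV[R]_d) (Y : Omega -> 'rV[R]_k) : \bar R :=
  \int[P]_w (loss (f (X w)) (Y w))%:E.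

Definition adv_risk (R : realType) (d0 : measure_display) (Omega : measurableType d0)
  (P : probability Omega R) (d k : nat) (N : 'rV[R]_d -> R) (eps : R)
  (loss : 'rV[R]_k -> 'rV[R]_k -> R) (f : 'rV[R]_d -> 'rV[R]_k)
  (X : Omega -> 'rV[R]_d) (Y : Omega -> 'rV[R]_k) : \bar R :=
  \int[P]_w ereal_sup [set (loss (f (X w + D)) (Y w))%:E | D in [set D | (N D <= eps)%R]].

From HB Require Import structures.
From mathcomp Require Import all_boot all_order all_algebra.
From mathcomp Require Import all_classical all_reals all_analysis.
From mathcomp Require Import matrix_topology measurable_realfun.

(* Taking [v = v' = Y] in the second hypothesis gives, pointwise,
   B(f(X), f(X+D)) <= l(f(X), Y) + l(f(X+D), Y), whence the first bound after
   taking the supremum over D and expectations.  Taking [u = u' = f(X)] in the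
   first one gives B(Y, Y') <= l(f(X), Y) + l(f(X), Y'); since (X, Y') has the
   same law as (X, Y), the right-hand side has expectation 2 R(f), and
   R(f) <= R_eps(f) because D = 0 is an admissible perturbation. *)

Import Order.TTheory GRing.Theory Num.Theory.
Import numFieldNormedType.Exports.
Local Open Scope classical_set_scope.
Local Open Scope ring_scope.
Local Open Scope ereal_scope.

Section conditional_copy.
Context {R : realType} {d0 d1 d2 : measure_display} {Omega : measurableType d0}
  {T1 : measurableType d1} {T2 : measurableType d2}.
Context {P : probability Omega R} {X : Omega -> T1} {Y Y' : Omega -> T2}.
Hypotheses (mX : measurable_fun setT X) (mY : measurable_fun setT Y)
  (mY' : measurable_fun setT Y').
Context {kappa : R.-pker T1 ~> T2}.
Hypothesis joint_law : forall (A : set T1) (C C' : set T2),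
  measurable A -> measurable C -> measurable C' ->
  P (X @^-1` A `&` Y @^-1` C `&` Y' @^-1` C')
  = \int[P]_(w in X @^-1` A) (kappa (X w) C * kappa (X w) C').

Let mXY : measurable_fun setT (fun w => (X w, Y w)).
Proof. exact: measurable_fun_pair. Qed.

Let mXY' : measurable_fun setT (fun w => (X w, Y' w)).
Proof. exact: measurable_fun_pair. Qed.

Lemma conditional_copy_pair_law (E : set (T1 * T2)) : measurable E ->
  P ((fun w => (X w, Y w)) @^-1` E) = P ((fun w => (X w, Y' w)) @^-1` E).
Proof.
set G := [set A `*` C | A in @measurable _ T1 & C in @measurable _ T2].
apply: (@measure_unique _ R _ G (fun _ => setT) _ _ _ _
  (pushforward P (fun w => (X w, Y w))) (pushforward P (fun w => (X w, Y' w)))).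
- exact: measurable_prod_measurableType.
- move=> _ _ [A1 mA1 [C1 mC1 <-]] [A2 mA2 [C2 mC2 <-]].
  exists (A1 `&` A2); first exact: measurableI.
  by exists (C1 `&` C2); [exact: measurableI | rewrite setXI].
- by move=> _; exists setT => //; exists setT => //; rewrite setXTT.
- by rewrite bigcup_const.
- move=> _ [A mA [C mC <-]].
  change (P ((fun w => (X w, Y w)) @^-1` (A `*` C))
          = P ((fun w => (X w, Y' w)) @^-1` (A `*` C))).
  have -> : (fun w => (X w, Y w)) @^-1` (A `*` C)
      = X @^-1` A `&` Y @^-1` C `&` Y' @^-1` setT.
    by rewrite preimage_setT setIT.
  have -> : (fun w => (X w, Y' w)) @^-1` (A `*` C)
      = X @^-1` A `&` Y @^-1` setT `&` Y' @^-1` C.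
    by rewrite preimage_setT setIT.
  rewrite !joint_law //; apply: eq_integral => w _.
  by rewrite !prob_kernel mule1 mul1e.
- by move=> _; change (P setT < +oo); rewrite probability_setT ltry.
Qed.

Lemma conditional_copy_ge0_integral (g : T1 * T2 -> \bar R) :
  measurable_fun setT g -> (forall p, 0 <= g p) ->
  \int[P]_w g (X w, Y w) = \int[P]_w g (X w, Y' w).
Proof.
move=> mg g0.
have := ge0_integral_pushforward mXY P measurableT mg (fun p _ => g0 p).
have := ge0_integral_pushforward mXY' P measurableT mg (fun p _ => g0 p).
rewrite !preimage_setT => <- <-.
by apply: eq_measure_integral => E mE _; exact: conditional_copy_pair_law.
Qed.

End conditional_copy.

Lemma is_norm0 {R : realType} {n : nat} {N : 'rV[R]_n -> R} :
  is_norm N -> N 0%R = 0%R.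
Proof. by case=> _ _ NZ _; rewrite -(scale0r (0%R : 'rV[R]_n)) NZ normr0 mul0r. Qed.

Section risk_bounds.
Context {R : realType} {d0 : measure_display} {Omega : measurableType d0}.
Context {P : probability Omega R} {d k : nat}.
Context {N : 'rV[R]_d -> R} {eps : R} {loss : 'rV[R]_k -> 'rV[R]_k -> R}.
Context {f : 'rV[R]_d -> 'rV[R]_k} {X : Omega -> 'rV[R]_d}.
Hypotheses (loss_ge0 : forall u v, (0 <= loss u v)%R)
  (mloss : measurable_fun setT (fun p : 'rV[R]_k * 'rV[R]_k => loss p.1 p.2))
  (mf : measurable_fun setT f) (mX : measurable_fun setT X).

Let adv_sup (g : 'rV[R]_d -> R) :=
  ereal_sup [set (g D)%:E | D in [set D | (N D <= eps)%R]].

Lemma measurable_loss_comp {Y : Omega -> 'rV[R]_k} : measurable_fun setT Y ->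
  measurable_fun setT (fun w => (loss (f (X w)) (Y w))%:E).
Proof.
move=> mY; apply/measurable_EFinP.
exact: measurableT_comp mloss (measurable_fun_pair (measurableT_comp mf mX) mY).
Qed.

Context {Y : Omega -> 'rV[R]_k}.
Hypothesis mY : measurable_fun setT Y.

Let mL : measurable_fun setT (fun w => (loss (f (X w)) (Y w))%:E).
Proof. exact: measurable_loss_comp. Qed.

Let L_ge0 w : 0 <= (loss (f (X w)) (Y w))%:E.
Proof. by rewrite lee_fin. Qed.

Lemma B_le_risk_add {B : 'rV[R]_k -> 'rV[R]_k -> R} {Y' : Omega -> 'rV[R]_k} :
  (forall u v v', B v v' <= loss u v + loss u v')%R ->
  (forall v v', 0 <= B v v')%R ->
  measurable_fun setT Y' ->
  measurable_fun setT (fun w => B (Y w) (Y' w)) ->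
  \int[P]_w (B (Y w) (Y' w))%:E <= risk P loss f X Y + risk P loss f X Y'.
Proof.
move=> B_le B_ge0 mY' mB.
have L'_ge0 w : 0 <= (loss (f (X w)) (Y' w))%:E by rewrite lee_fin.
have mL' := measurable_loss_comp mY'.
rewrite /risk -(ge0_integralD P measurableT (fun w _ => L_ge0 w) mL
  (fun w _ => L'_ge0 w) mL').
apply: ge0_le_integral => //.
- by move=> w _; rewrite lee_fin.
- exact/measurable_EFinP.
- exact: emeasurable_funD.
by move=> w _; rewrite -EFinD lee_fin.
Qed.

Hypotheses (N0 : N 0%R = 0%R) (eps_ge0 : (0 <= eps)%R).

Let le_adv_sup0 (g : 'rV[R]_d -> R) : (g 0%R)%:E <= adv_sup g.
Proof. by apply: ereal_sup_ubound; exists 0%R; rewrite //= N0. Qed.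

Hypothesis madv : measurable_fun setT
  (fun w => adv_sup (fun D => loss (f (X w + D)) (Y w))).

Let L_le_adv w :
  (loss (f (X w)) (Y w))%:E <= adv_sup (fun D => loss (f (X w + D)) (Y w)).
Proof. by have := le_adv_sup0 (fun D => loss (f (X w + D)) (Y w)); rewrite addr0. Qed.

Lemma risk_le_adv_risk : risk P loss f X Y <= adv_risk P N eps loss f X Y.
Proof. by apply: ge0_le_integral => // w _; exact: L_le_adv. Qed.

Lemma adv_B_le_risk_add (B : 'rV[R]_k -> 'rV[R]_k -> R) :
  (forall u u' v, B u u' <= loss u v + loss u' v)%R ->
  (forall u u', 0 <= B u u')%R ->
  measurable_fun setT (fun w => adv_sup (fun D => B (f (X w)) (f (X w + D)))) ->
  \int[P]_w adv_sup (fun D => B (f (X w)) (f (X w + D)))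
    <= risk P loss f X Y + adv_risk P N eps loss f X Y.
Proof.
move=> B_le B_ge0 mBsup.
have adv_ge0 w : 0 <= adv_sup (fun D => loss (f (X w + D)) (Y w)).
  exact: le_trans (L_ge0 w) (L_le_adv w).
rewrite /risk /adv_risk -(ge0_integralD P measurableT (fun w _ => L_ge0 w) mL
  (fun w _ => adv_ge0 w) madv).
apply: ge0_le_integral => //.
- by move=> w _; apply: le_trans (le_adv_sup0 _); rewrite lee_fin.
- exact: emeasurable_funD.
move=> w _; apply: ge_ereal_sup => _ [D hD <-].
apply: (@le_trans _ _
  ((loss (f (X w)) (Y w))%:E + (loss (f (X w + D)) (Y w))%:E)).
  by rewrite -EFinD lee_fin.
by rewrite leeD2l //; apply: ereal_sup_ubound; exists D.
Qed.

End risk_bounds.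

Theorem theorem1 (R : realType) (d k : nat) (hd : (0 < d)%N) (hk : (0 < k)%N)
  (N : 'rV[R]_d -> R) (hN : is_norm N) (eps : R) (heps : (0 <= eps)%R)
  (d0 : measure_display) (Omega : measurableType d0) (P : probability Omega R)
  (X : Omega -> 'rV[R]_d) (Y Y' : Omega -> 'rV[R]_k)
  (mX : measurable_fun setT X) (mY : measurable_fun setT Y)
  (mY' : measurable_fun setT Y')
  (* Y' : conditionally on X, independent of Y with the same conditional law:
     there is a probability kernel kappa (the conditional law of Y given X)
     such that the conditional joint law of (Y, Y') given X is kappa (x) kappa. *)
  (hY' : exists kappa : R.-pker 'rV[R]_d ~> 'rV[R]_k,
     forall (Ad : set 'rV[R]_d) (C C' : set 'rV[R]_k),
       measurable Ad -> measurable C -> measurable C' ->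
       P (X @^-1` Ad `&` Y @^-1` C `&` Y' @^-1` C')
       = \int[P]_(w in X @^-1` Ad) (kappa (X w) C * kappa (X w) C'))
  (loss : 'rV[R]_k -> 'rV[R]_k -> R)
  (loss_ge0 : forall u v, (0 <= loss u v)%R)
  (mloss : measurable_fun setT (fun p : 'rV[R]_k * 'rV[R]_k => loss p.1 p.2))
  (A B : 'rV[R]_k -> 'rV[R]_k -> R)
  (A_ge0 : forall u v, (0 <= A u v)%R) (B_ge0 : forall u v, (0 <= B u v)%R)
  (A_diag : forall u, A u u = 0%R) (B_diag : forall u, B u u = 0%R)
  (hAB1 : forall u v u' v', (loss u v + loss u' v' + A u u' >= B v v')%R)
  (hAB2 : forall u v u' v', (loss u v + loss u' v' + A v v' >= B u u')%R)
  (F : set ('rV[R]_d -> 'rV[R]_k))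
  (* expectations well defined: the integrands are measurable *)
  (mB : measurable_fun setT (fun w => B (Y w) (Y' w)))
  (f : 'rV[R]_d -> 'rV[R]_k) (hf : F f) (mf : measurable_fun setT f)
  (madv : measurable_fun setT (fun w : Omega =>
     ereal_sup [set (loss (f (X w + D)) (Y w))%:E | D in [set D | (N D <= eps)%R]]
     : \bar R))
  (mBsup : measurable_fun setT (fun w : Omega =>
     ereal_sup [set (B (f (X w)) (f (X w + D)))%:E | D in [set D | (N D <= eps)%R]]
     : \bar R)) :
  risk P loss f X Y + adv_risk P N eps loss f X Y >=
  maxe (\int[P]_w ereal_sup
          [set (B (f (X w)) (f (X w + D)))%:E | D in [set D | (N D <= eps)%R]])
       (\int[P]_w (B (Y w) (Y' w))%:E).
Proof.
have [kappa joint_law] := hY'.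
have N0 := is_norm0 hN.
have B_le_out u u' v : (B u u' <= loss u v + loss u' v)%R.
  by have := hAB2 u v u' v; rewrite A_diag addr0.
have B_le_in u v v' : (B v v' <= loss u v + loss u v')%R.
  by have := hAB1 u v u v'; rewrite A_diag addr0.
have risk_copy : risk P loss f X Y' = risk P loss f X Y.
  apply/esym/(conditional_copy_ge0_integral mX mY mY' joint_law
    (fun p => (loss (f p.1) p.2)%:E)) => [|p]; last by rewrite lee_fin.
  exact: (measurable_loss_comp (X := fst) (Y := snd) mloss mf measurable_fst
    measurable_snd).
rewrite ge_max; apply/andP; split; first exact: adv_B_le_risk_add.
apply: le_trans (B_le_risk_add loss_ge0 mloss mf mX mY B_le_in B_ge0 mY' mB) _.
by rewrite risk_copy leeD2l // risk_le_adv_risk.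
Qed.
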